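(* Let $a,b$ be integers with $b>a>2$, and set $r:=\min\{\,b-1,\ (a-1)(\lfloor b/a\rfloor+1)\,\}$. Then for every integer $c\geq \operatorname{lcm}(a,b)-r$ there exists a tame polynomial automorphism $F$ of $\mathbb{C}^3$ with $\operatorname{mdeg}F=(a,b,c)$.
   Context: For a polynomial automorphism $F=(F_1,\ldots,F_n)$ of $\mathbb{C}^n$, its multidegree is $\operatorname{mdeg}F:=(\deg F_1,\ldots,\deg F_n)$, where $\deg$ is total degree. A map $F=(F_1,\ldots,F_n)$ is elementary if for some $j\leq n$ and some polynomial $g$ in $n-1$ variables, $F_j=X_j+g(X_1,\ldots,\widehat{X_j},\ldots,X_n)$ and $F_i=X_i$ for $i\neq j$. A polynomial automorphism is tame if it is a composition of invertible affine-linear maps and elementary maps. *)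

(* Polynomials in 3 variables are encoded as nested
   univariate polynomials: p : {poly {poly {poly C}}}, where the coefficient
   of X1^i X2^j X3^k is p`_i`_j`_k. *)
From HB Require Import structures.
From mathcomp Require Import all_boot all_order all_algebra.
Set Implicit Arguments. Unset Strict Implicit. Unset Printing Implicit Defensive.
Import Order.TTheory GRing.Theory Num.Theory.
Local Open Scope ring_scope.

Definition P3 (C : comNzRingType) := {poly {poly {poly C}}}.

Definition o0 : 'I_3 := @Ordinal 3 0 isT.
Definition o1 : 'I_3 := @Ordinal 3 1 isT.
Definition o2 : 'I_3 := @Ordinal 3 2 isT.

Definition pconst (C : comNzRingType) (c : C) : P3 C := (c%:P)%:P%:P.

Definition pvar (C : comNzRingType) (i : 'I_3) : P3 C :=
  match val i with
  | 0%N => 'X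
  | 1%N => ('X : {poly {poly C}})%:P
  | _ => (('X : {poly C})%:P)%:P
  end.

Definition peval (C : comNzRingType) (p : P3 C) (g : 'I_3 -> P3 C) : P3 C :=
  \sum_(i < size p) \sum_(j < size p`_i) \sum_(k < size p`_i`_j)
     @pconst C (p`_i`_j`_k) * g o0 ^+ i * g o1 ^+ j * g o2 ^+ k.

(* total degree (0 for the zero polynomial) *)
Definition tdeg (C : comNzRingType) (p : P3 C) : nat :=
  \max_(i < size p) \max_(j < size (p`_i)%R)
     \max_(k < size (p`_i`_j)%R | (p`_i`_j`_k)%R != 0%R) (i + j + k)%N.

Definition polymap (C : comNzRingType) := 'I_3 -> P3 C.

Definition pcomp (C : comNzRingType) (F G : polymap C) : polymap C :=
  fun i => peval (F i) G.

Definition mdeg (C : comNzRingType) (F : polymap C) : nat * nat * nat :=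
  (tdeg (F o0), tdeg (F o1), tdeg (F o2)).

Definition affine_inv (C : fieldType) (F : polymap C) : Prop :=
  exists (A : 'M[C]_3) (b : 'I_3 -> C), A \in unitmx /\
    forall i, F i = \sum_(j < 3) @pconst C (A i j) * @pvar C j + @pconst C (b i).

Definition indep_of (C : comNzRingType) (j : 'I_3) (g : P3 C) : Prop :=
  peval g (fun l => if l == j then 0 else @pvar C l) = g.

Definition elementary (C : comNzRingType) (F : polymap C) : Prop :=
  exists (j : 'I_3) (g : P3 C), indep_of j g /\
    F j = @pvar C j + g /\ forall i, i != j -> F i = @pvar C i.

Inductive tame (C : fieldType) : polymap C -> Prop :=
  | tame_aff F : affine_inv F -> tame F
  | tame_elem F : elementary F -> tame F
  | tame_comp F G : tame F -> tame G -> tame (pcomp F G).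

(* Write g = gcd(a, b), a = a'g, b = b'g, so that L = lcm(a, b) = a b' = b a', and
   s = b div a.  Let S be the a'-th root of (1 + X)^b' truncated after X^s, and
   T = sum_(k <= s) S_k X1^k X3^(b - k a) its homogenisation.  The composite of three
   elementary maps is
     F = (f1, f2, f3) = (X1 + X3^a, X2 + X3^m + T, X3 + (f2^a' - f1^b') f1^k),
   with deg f1 = a and deg f2 = b.  In f2^a' - f1^b' = (f2^a' - T^a') + (T^a' - f1^b')
   the first summand has leading term a' X3^(m + b(a'-1)), free of X1.  The
   substitution X1 |-> X1 X3^a maps T^a' - f1^b' to X3^L (S^a' - (1 + X1)^b'), which
   vanishes to order s + 1 in X1; hence T^a' - f1^b' has degree at most
   L - (a-1)(s+1) <= m + b(a'-1) and no monomial free of X1, so it cannot cancel that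
   leading term.  Thus deg f3 = m + a k + L - b, and every c >= L - r has this form
   with 0 < m < b and k >= 0. *)

From Pilot Require Import Defs.
From HB Require Import structures.
From mathcomp Require Import all_boot all_order all_algebra zify.
Set Implicit Arguments. Unset Strict Implicit. Unset Printing Implicit Defensive.
Import Order.TTheory GRing.Theory Num.Theory.
Local Open Scope ring_scope.

Record degree_bound (R : nzRingType) (P : R -> nat -> Prop) : Prop := DegreeBound {
  dbound0 : forall n, P 0 n;
  dboundD : forall x y n, P x n -> P y n -> P (x + y) n;
  dboundN : forall x n, P x n -> P (- x) n;
  dboundM : forall x y m n, P x m -> P y n -> P (x * y) (m + n)%N;
  dbound_le : forall x m n, P x m -> (m <= n)%N -> P x n;
  dbound1 : P 1 0%N }.

(* A degree bound on [R] induces one on [{poly R}], the variable having degree 1. *)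
Definition poly_dbound (R : nzRingType) (P : R -> nat -> Prop) (p : {poly R}) (n : nat) :=
  forall i, p`_i != 0 -> (i <= n)%N /\ P p`_i (n - i)%N.

Section PolyDegreeBound.
Variables (R : nzRingType) (P : R -> nat -> Prop).
Hypothesis dbP : degree_bound P.

Lemma poly_dboundM p q m n :
  poly_dbound P p m -> poly_dbound P q n -> poly_dbound P (p * q) (m + n).
Proof.
move=> Hp Hq i; rewrite coefM => nz.
have [[j /= lt_ji] nz_j | all0] := pickP (fun j : 'I_i.+1 => p`_j * q`_(i - j) != 0);
  last by rewrite big1 ?eqxx // in nz => j _; apply/eqP/negbFE/all0.
have nz_pj : p`_j != 0 by apply: contraNneq nz_j => ->; rewrite mul0r.
have nz_qj : q`_(i - j) != 0 by apply: contraNneq nz_j => ->; rewrite mulr0.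
have [[le_pj _] [le_qj _]] := (Hp j nz_pj, Hq _ nz_qj).
split; first by lia.
apply: (big_ind (fun z => P z (m + n - i))) => [|x y|[k lt_ki] _ /=].
- exact: dbound0.
- exact: dboundD.
have [->|nz_pk] := eqVneq p`_k 0; first by rewrite mul0r; apply: dbound0.
have [->|nz_qk] := eqVneq q`_(i - k) 0; first by rewrite mulr0; apply: dbound0.
have [le_pk Ppk] := Hp k nz_pk; have [le_qk Pqk] := Hq _ nz_qk.
by apply: (dbound_le dbP (dboundM dbP Ppk Pqk)); lia.
Qed.

Lemma poly_degree_bound : degree_bound (poly_dbound P).
Proof.
split.
- by move=> n i; rewrite coef0 eqxx.
- move=> p q n Hp Hq i; rewrite coefD.
  have [-> | nz_p] := eqVneq p`_i 0; first by rewrite add0r; apply: Hq.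
  have [-> | nz_q] := eqVneq q`_i 0; first by rewrite addr0 => _; apply: Hp.
  have [le_in Pp] := Hp i nz_p; have [_ Pq] := Hq i nz_q.
  by move=> _; split; last apply: dboundD.
- move=> p n Hp i; rewrite coefN oppr_eq0 => /Hp [le_in Pp].
  by split; last apply: dboundN.
- exact: poly_dboundM.
- move=> p m n Hp le_mn i /Hp [le_im Pp]; split; first by lia.
  by apply: (dbound_le dbP Pp); lia.
- by move=> [|i]; rewrite coef1 ?eqxx // => _; split; last apply: dbound1.
Qed.

Lemma poly_dboundC c n : P c n -> poly_dbound P c%:P n.
Proof. by move=> Pc [|i]; rewrite coefC ?eqxx //= subn0. Qed.

Lemma poly_dboundX : poly_dbound P 'X 1.
Proof. by move=> [|[|i]]; rewrite coefX ?eqxx // => _; split; last apply: dbound1. Qed.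

End PolyDegreeBound.

Section TotalDegree.
Variable C : comNzRingType.
Implicit Types (p q : P3 C) (c : C).

Definition tdeg_bound : P3 C -> nat -> Prop :=
  poly_dbound (poly_dbound (poly_dbound (fun (_ : C) (_ : nat) => True))).

Lemma tdeg_degree_bound : degree_bound tdeg_bound.
Proof. by do 3 apply: poly_degree_bound. Qed.

Lemma tdeg_coef_le p i j k : p`_i`_j`_k != 0 -> (i + j + k <= tdeg p)%N.
Proof.
move=> nz; have nz_ij : p`_i`_j != 0 by apply: contraNneq nz => ->; rewrite coef0.
have nz_i : p`_i != 0 by apply: contraNneq nz_ij => ->; rewrite coef0.
have lt_i : (i < size p)%N by rewrite ltnNge; apply: contra nz_i => /(nth_default 0) ->.
have lt_j : (j < size (p`_i)%R)%N by rewrite ltnNge; apply: contra nz_ij => /(nth_default 0) ->.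
have lt_k : (k < size (p`_i`_j)%R)%N by rewrite ltnNge; apply: contra nz => /(nth_default 0) ->.
rewrite /tdeg; apply: leq_trans (leq_bigmax (Ordinal lt_i)) => /=.
apply: leq_trans (leq_bigmax (Ordinal lt_j)) => /=.
exact: (leq_bigmax_cond (Ordinal lt_k)).
Qed.

Lemma tdeg_leP p n :
  (tdeg p <= n)%N <-> forall i j k, p`_i`_j`_k != 0 -> (i + j + k <= n)%N.
Proof.
split=> [le_pn i j k /tdeg_coef_le /leq_trans | H]; first exact.
by do 3 apply/bigmax_leqP => ? ?; apply: H.
Qed.

Lemma tdeg_boundP p n : tdeg_bound p n <-> (tdeg p <= n)%N.
Proof.
have lead_nz (R : nzRingType) (r : {poly R}) : r != 0 -> r`_(size r).-1 != 0.
  by rewrite -lead_coefE lead_coef_eq0.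
rewrite tdeg_leP; split=> [H i j k nz | H i nz_i].
  have nz_ij : p`_i`_j != 0 by apply: contraNneq nz => ->; rewrite coef0.
  have nz_i : p`_i != 0 by apply: contraNneq nz_ij => ->; rewrite coef0.
  have [le_in /(_ j nz_ij) [le_j /(_ k nz) [le_k _]]] := H i nz_i; lia.
have := H _ _ _ (lead_nz _ _ (lead_nz _ _ nz_i)); split; first by lia.
move=> j nz_ij; have := H _ _ _ (lead_nz _ _ nz_ij); split; first by lia.
by move=> k /H; split; first lia.
Qed.

Lemma tdeg_eq_coef p n i j k :
  (tdeg p <= n)%N -> p`_i`_j`_k != 0 -> (i + j + k)%N = n -> tdeg p = n.
Proof. by move=> le_pn /tdeg_coef_le le_ijk e; apply/eqP; rewrite eqn_leq le_pn -e. Qed.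

Lemma tdeg0 : tdeg (0 : P3 C) = 0%N.
Proof. by apply/eqP; rewrite -leqn0 -tdeg_boundP; apply: (dbound0 tdeg_degree_bound). Qed.

Lemma tdegD_le p q n : (tdeg p <= n)%N -> (tdeg q <= n)%N -> (tdeg (p + q)%R <= n)%N.
Proof. by rewrite -!tdeg_boundP; apply: (dboundD tdeg_degree_bound). Qed.

Lemma tdegM_le p q m n :
  (tdeg p <= m)%N -> (tdeg q <= n)%N -> (tdeg (p * q)%R <= m + n)%N.
Proof. by rewrite -!tdeg_boundP; apply: (dboundM tdeg_degree_bound). Qed.

Lemma tdegX_le p n e : (tdeg p <= n)%N -> (tdeg (p ^+ e)%R <= n * e)%N.
Proof.
move=> le_pn; elim: e => [|e IH]; last by rewrite exprS mulnS tdegM_le.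
by rewrite expr0 muln0 -tdeg_boundP; apply: (dbound1 tdeg_degree_bound).
Qed.

Lemma tdeg_sum_le (I : finType) (F : I -> P3 C) n :
  (forall i, tdeg (F i) <= n)%N -> (tdeg (\sum_i F i)%R <= n)%N.
Proof.
move=> le_F; apply: (big_ind (fun q : P3 C => tdeg q <= n)%N) => // [|x y].
  by rewrite tdeg0.
exact: tdegD_le.
Qed.

Lemma tdeg_pconst c : tdeg (pconst c) = 0%N.
Proof. by apply/eqP; rewrite -leqn0 -tdeg_boundP; do 3 apply: poly_dboundC. Qed.

Lemma tdeg_pvar i : (tdeg (pvar C i) <= 1)%N.
Proof.
rewrite -tdeg_boundP /pvar; case: i => [[|[|i]] _] /=.
- by apply: poly_dboundX; do 2 apply: poly_degree_bound.
- by apply: poly_dboundC; apply: poly_dboundX; apply: poly_degree_bound.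
- by do 2 apply: poly_dboundC; apply: poly_dboundX.
Qed.

End TotalDegree.

Section LeadTerm.
Variable C : comNzRingType.
Implicit Types (p q : P3 C) (c : C).

Lemma pconst0 : pconst (0 : C) = 0.
Proof. by rewrite /pconst !rmorph0. Qed.

Lemma pconst1 : pconst (1 : C) = 1.
Proof. by rewrite /pconst !rmorph1. Qed.

Lemma pconstD c d : pconst c + pconst d = pconst (c + d).
Proof. by rewrite /pconst !rmorphD. Qed.

Lemma pconstM c d : pconst c * pconst d = pconst (c * d).
Proof. by rewrite /pconst !rmorphM. Qed.

Definition monomial (i j k : nat) : P3 C := pvar C o0 ^+ i * pvar C o1 ^+ j * pvar C o2 ^+ k.

Lemma monomialM i j k i' j' k' :
  monomial i j k * monomial i' j' k' = monomial (i + i') (j + j') (k + k').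
Proof. by rewrite /monomial !exprD mulrACA [X in X * _]mulrACA. Qed.

Lemma pconst1_monomialX3 k : pconst 1 * monomial 0 0 k = pvar C o2 ^+ k.
Proof. by rewrite pconst1 mul1r /monomial !expr0 !mul1r. Qed.

Lemma pconst1_monomialX2 : pconst 1 * monomial 0 1 0 = pvar C o1.
Proof. by rewrite pconst1 mul1r /monomial !expr0 mul1r mulr1. Qed.

Lemma pconst_monomialE c i j k :
  pconst c * monomial i j k = (((c%:P * 'X^k)%:P * 'X^j)%:P) * 'X^i.
Proof.
rewrite /pconst /monomial /pvar /= !rmorphM /= !rmorphXn /= -!mulrA.
by congr (_ * _); rewrite [_ * 'X^i]mulrC mulrA [RHS]mulrC.
Qed.

Lemma coef_pconst_monomial c i j k i' j' k' :
  (pconst c * monomial i j k)`_i'`_j'`_k' =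
  if [&& i' == i, j' == j & k' == k] then c else 0.
Proof.
rewrite pconst_monomialE !(coefMXn, coefC).
have [lt_i|le_i] := ltnP i' i; first by rewrite (ltn_eqF lt_i) !coef0.
have [->|ne_i] := eqVneq i' i; last by rewrite subn_eq0 leqNgt ltn_neqAle eq_sym ne_i le_i !coef0.
rewrite subnn coefMXn coefC.
have [lt_j|le_j] := ltnP j' j; first by rewrite (ltn_eqF lt_j) coef0.
have [->|ne_j] := eqVneq j' j; last by rewrite subn_eq0 leqNgt ltn_neqAle eq_sym ne_j le_j coef0.
rewrite subnn coefMXn coefC.
have [lt_k|le_k] := ltnP k' k; first by rewrite (ltn_eqF lt_k).
have [->|ne_k] := eqVneq k' k; last by rewrite subn_eq0 leqNgt ltn_neqAle eq_sym ne_k le_k.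
by rewrite subnn.
Qed.

Lemma tdeg_pconst_monomial c i j k : (tdeg (pconst c * monomial i j k)%R <= i + j + k)%N.
Proof.
apply/tdeg_leP => i' j' k'; rewrite coef_pconst_monomial.
by case: and3P => [[/eqP-> /eqP-> /eqP->] | _]; rewrite ?eqxx.
Qed.

(* For [i + j + k = 0] the bound [(i + j + k).-1 = 0] does not make [q] of lower
   degree, hence the positivity side conditions below. *)
Definition lead_term p c i j k :=
  exists2 q, p = pconst c * monomial i j k + q & (tdeg q <= (i + j + k).-1)%N.

Lemma lead_term_coef p c i j k :
  lead_term p c i j k -> (0 < i + j + k)%N -> p`_i`_j`_k = c.
Proof.
case=> q -> le_q pos; rewrite !coefD coef_pconst_monomial !eqxx.
have [->|/tdeg_coef_le] := eqVneq q`_i`_j`_k 0; first by rewrite addr0.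
by move=> /leq_trans/(_ le_q); rewrite -subn1 leq_subRL // addnC addn1 ltnn.
Qed.

Lemma lead_term_tdeg_le p c i j k : lead_term p c i j k -> (tdeg p <= i + j + k)%N.
Proof.
case=> q -> le_q; apply: tdegD_le; first exact: tdeg_pconst_monomial.
exact: leq_trans le_q (leq_pred _).
Qed.

Lemma lead_term_tdeg p c i j k :
  lead_term p c i j k -> c != 0 -> (0 < i + j + k)%N -> tdeg p = (i + j + k)%N.
Proof.
move=> lt_p nz_c pos; apply/eqP; rewrite eqn_leq (lead_term_tdeg_le lt_p) /=.
by apply: tdeg_coef_le; rewrite (lead_term_coef lt_p).
Qed.

Lemma lead_termD p q c d i j k :
  lead_term p c i j k -> lead_term q d i j k -> lead_term (p + q) (c + d) i j k.
Proof.
case=> p' -> le_p' [q' -> le_q']; exists (p' + q'); last exact: tdegD_le.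
by rewrite -pconstD mulrDl addrACA.
Qed.

Lemma lead_term_addr p r c i j k :
  lead_term p c i j k -> (tdeg r <= (i + j + k).-1)%N -> lead_term (p + r) c i j k.
Proof. by case=> q -> le_q le_r; exists (q + r); rewrite ?addrA ?tdegD_le. Qed.

Lemma lead_term_sum n (F : 'I_n -> P3 C) c i j k :
  (forall t, lead_term (F t) c i j k) -> lead_term (\sum_(t < n) F t) (c *+ n) i j k.
Proof.
elim: n F => [|n IH] F lt_F.
  by rewrite big_ord0 mulr0n; exists 0; rewrite ?tdeg0 // pconst0 mul0r addr0.
by rewrite big_ord_recr mulrSr; apply: lead_termD; [apply: IH|].
Qed.

Lemma lead_termM p q c d i j k i' j' k' :
  lead_term p c i j k -> lead_term q d i' j' k' ->
  (0 < i + j + k)%N -> (0 < i' + j' + k')%N ->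
  lead_term (p * q) (c * d) (i + i') (j + j') (k + k').
Proof.
case=> p' -> le_p' [q' -> le_q'] pos pos'.
exists (pconst c * monomial i j k * q' + p' * (pconst d * monomial i' j' k') + p' * q').
  rewrite mulrDr !mulrDl -!addrA mulrACA pconstM monomialM.
  by congr (_ + _); rewrite addrCA.
have lead_q := tdeg_pconst_monomial d i' j' k'.
have lead_p := tdeg_pconst_monomial c i j k.
repeat apply: tdegD_le.
- by apply: leq_trans (tdegM_le lead_p le_q') _; lia.
- by apply: leq_trans (tdegM_le le_p' lead_q) _; lia.
- by apply: leq_trans (tdegM_le le_p' le_q') _; lia.
Qed.

Lemma lead_termMX p q c d i j k i' j' k' e :
  lead_term p c i j k -> lead_term q d i' j' k' ->
  (0 < i + j + k)%N -> (0 < i' + j' + k')%N ->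
  lead_term (p * q ^+ e) (c * d ^+ e) (i + i' * e) (j + j' * e) (k + k' * e).
Proof.
move=> lt_p lt_q pos pos'.
elim: e p c i j k pos lt_p => [|e IH] p c i j k pos lt_p.
  by rewrite !expr0 !mulr1 !muln0 !addn0.
rewrite !exprS !mulrA !mulnS !addnA.
by apply: IH; [lia | apply: lead_termM].
Qed.

End LeadTerm.

Section Substitution.
Variables (C : comNzRingType) (g : 'I_3 -> P3 C).
Implicit Types (p q : P3 C).

Local Notation peval_morph := (horner_eval (g o0) \o map_poly (horner_eval (g o1) \o
  map_poly (horner_eval (g o2) \o map_poly (polyC \o polyC \o polyC)))).

Lemma horner_eval_mapE (R : nzRingType) (x : P3 C) (f : R -> P3 C) (p : {poly R}) :
  f 0 = 0 -> (horner_eval x \o map_poly f) p = \sum_(i < size p) f p`_i * x ^+ i.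
Proof.
move=> f0; rewrite /= /horner_eval (horner_coef_wide _ (size_poly _ _)).
by apply: eq_bigr => i _; rewrite coef_map_id0.
Qed.

Lemma pevalE p : peval p g = peval_morph p.
Proof.
rewrite /peval horner_eval_mapE; last by rewrite /= map_poly0 horner_evalE horner0.
apply: eq_bigr => i _; rewrite horner_eval_mapE; last by rewrite /= map_poly0 horner_evalE horner0.
rewrite mulr_suml; apply: eq_bigr => j _; rewrite horner_eval_mapE ?rmorph0 //.
rewrite !mulr_suml; apply: eq_bigr => k _; rewrite /pconst /= -!mulrA; congr (_ * _).
by rewrite [_ * g o0 ^+ i]mulrC mulrA [RHS]mulrC.
Qed.

Lemma pevalD p q : peval (p + q) g = peval p g + peval q g.
Proof. by rewrite !pevalE rmorphD. Qed.

Lemma pevalB p q : peval (p - q) g = peval p g - peval q g.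
Proof. by rewrite !pevalE rmorphB. Qed.

Lemma pevalM p q : peval (p * q) g = peval p g * peval q g.
Proof. by rewrite !pevalE rmorphM. Qed.

Lemma pevalX p n : peval (p ^+ n) g = peval p g ^+ n.
Proof. by rewrite !pevalE rmorphXn. Qed.

Lemma peval_sum (I : finType) (F : I -> P3 C) :
  peval (\sum_i F i) g = \sum_i peval (F i) g.
Proof. by rewrite pevalE rmorph_sum; apply: eq_bigr => i _; rewrite pevalE. Qed.

Lemma peval_pconst c : peval (pconst c) g = pconst c.
Proof. by rewrite pevalE /pconst; do 3 rewrite /= map_polyC /= horner_evalE hornerC. Qed.

Lemma peval_pvar i : peval (pvar C i) g = g i.
Proof.
rewrite pevalE; case: i => [[|[|[|//]]] lt_i3] /=; rewrite /pvar /=.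
- by rewrite map_polyX horner_evalE hornerX; congr g; apply: val_inj.
- rewrite map_polyC /= horner_evalE hornerC /= map_polyX horner_evalE hornerX.
  by congr g; apply: val_inj.
- do 2 rewrite /= map_polyC /= horner_evalE hornerC.
  rewrite /= map_polyX horner_evalE hornerX.
  by congr g; apply: val_inj.
Qed.

End Substitution.

Section Components.
Variable C : comNzRingType.

Definition homog_trunc (S : {poly C}) (a b s : nat) : P3 C :=
  \sum_(k < s.+1) pconst S`_k * pvar C o0 ^+ k * pvar C o2 ^+ (b - k * a).

Definition f1 (a : nat) : P3 C := pvar C o0 + pvar C o2 ^+ a.

(* For [m = 1] the summand [X3] is dropped: [X2] then plays its role. *)
Definition low_term (m : nat) : P3 C := if m == 1%N then 0 else pvar C o2 ^+ m.

Definition f2 (S : {poly C}) (a b s m : nat) : P3 C :=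
  pvar C o1 + low_term m + homog_trunc S a b s.

End Components.

Definition elem_map (C : comNzRingType) (j : 'I_3) (g : P3 C) : polymap C :=
  fun i => if i == j then pvar C j + g else pvar C i.

Lemma elem_map_tame (C : fieldType) j (g : P3 C) : indep_of j g -> tame (elem_map j g).
Proof.
move=> indep_g; apply: tame_elem; exists j, g; split; first by [].
by rewrite /elem_map eqxx; split=> // i /negbTE->.
Qed.

Lemma pcomp_elem_map (C : comNzRingType) j (g : P3 C) (G : polymap C) i :
  Defs.pcomp (elem_map j g) G i = if i == j then G j + peval g G else G i.
Proof.
rewrite /Defs.pcomp /elem_map; case: ifP => [/eqP <-|_]; last exact: peval_pvar.
by rewrite pevalD peval_pvar.
Qed.

Lemma tame_triangular (C : fieldType) (a a' b' k : nat) (v : P3 C) :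
  indep_of o1 v ->
  exists F : polymap C, [/\ tame F, F o0 = f1 C a, F o1 = pvar C o1 + v &
    F o2 = pvar C o2 + ((pvar C o1 + v) ^+ a' - f1 C a ^+ b') * f1 C a ^+ k].
Proof.
move=> indep_v.
set w := (pvar C o1 ^+ a' - pvar C o0 ^+ b') * pvar C o0 ^+ k.
set G := Defs.pcomp (elem_map o0 (pvar C o2 ^+ a)) (elem_map o1 v).
have G0 : G o0 = f1 C a by rewrite /G pcomp_elem_map pevalX peval_pvar.
have G1 : G o1 = pvar C o1 + v by rewrite /G pcomp_elem_map.
have G2 : G o2 = pvar C o2 by rewrite /G pcomp_elem_map.
exists (Defs.pcomp (elem_map o2 w) G); split; rewrite ?pcomp_elem_map.
- apply: tame_comp; first apply: elem_map_tame.
    by rewrite /indep_of pevalM pevalB !pevalX !peval_pvar.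
  apply: tame_comp; apply: elem_map_tame => //.
  by rewrite /indep_of pevalX peval_pvar.
- by rewrite G0.
- by rewrite G1.
- by rewrite G2 pevalM pevalB !pevalX !peval_pvar G0 G1.
Qed.

Lemma coef0X (R : comNzRingType) (p : {poly R}) k : (p ^+ k)`_0 = p`_0 ^+ k.
Proof. by elim: k => [|k IH]; rewrite ?expr0 ?coef1 // !exprS coef0M IH. Qed.

(* Newton–Hensel lifting, one coefficient at a time: if [S ^+ n] agrees with [P]
   up to [X^N], adding [c X^(N+1)] changes [S ^+ n] by [n c X^(N+1)] modulo [X^(N+2)]. *)
Lemma truncated_root (F : fieldType) (n N : nat) (P : {poly F}) :
  n%:R != 0 :> F -> P`_0 = 1 ->
  exists S : {poly F}, [/\ (size S <= N.+1)%N, S`_0 = 1 &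
    forall i, (i <= N)%N -> (P - S ^+ n)`_i = 0].
Proof.
move=> nz_n P0; elim: N => [|N [S [size_S S0 approx_S]]].
  exists 1; split; rewrite ?size_poly1 ?coef1 // => i; rewrite leqn0 => /eqP->.
  by rewrite expr1n coefB coef1 P0 subrr.
set c := (P - S ^+ n)`_N.+1 / n%:R; set S' := S + c%:P * 'X^(N.+1).
set G := \sum_(j < n) S' ^+ (n.-1 - j) * S ^+ j.
have S'0 : S'`_0 = 1 by rewrite coefD coefCM coefXn mulr0 addr0.
have G0 : G`_0 = n%:R.
  rewrite coef_sum (eq_bigr (fun _ => 1)) ?sumr_const ?card_ord // => j _.
  by rewrite coef0M !coef0X S'0 S0 !expr1n mulr1.
have S'n : S' ^+ n = S ^+ n + 'X^(N.+1) * (c%:P * G).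
  have := subrXX S' S n; rewrite -/G addrAC subrr add0r => E.
  by rewrite -(subrK (S ^+ n) (S' ^+ n)) E addrC mulrAC mulrC.
exists S'; split => //.
  rewrite (leq_trans (size_polyD _ _)) // geq_max (leq_trans size_S) //.
  by rewrite mul_polyC (leq_trans (size_scale_leq _ _)) // size_polyXn.
move=> i le_i; rewrite S'n opprD addrA coefB coefXnM.
have [lt_i|] := ltnP i N.+1; first by rewrite approx_S ?subr0.
move=> le_Ni; have -> : i = N.+1 by apply/eqP; rewrite eqn_leq le_i le_Ni.
by rewrite subnn coefCM G0 divfK // subrr.
Qed.

Section Twist.
Variable C : comNzRingType.

Local Notation X3' := (('X : {poly C})%:P : {poly {poly C}}).

Definition twist a : {rmorphism P3 C -> P3 C} := comp_poly ('X * (X3' ^+ a)%:P).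

Lemma coef_twist a (p : P3 C) i : (twist a p)`_i = p`_i * X3' ^+ (a * i).
Proof.
have twistXn k : ('X * (X3' ^+ a)%:P) ^+ k = 'X^k * (X3' ^+ (a * k))%:P :> P3 C.
  by rewrite exprMn -rmorphXn -exprM.
rewrite /= coef_comp_poly (eq_bigr (fun k : 'I_(size p) => p`_k * (X3' ^+ (a * k) *+ (i == k)))); last first.
  by move=> k _; rewrite twistXn coefMC coefXn; case: eqP; rewrite ?mul1r ?mul0r ?mulr0.
have [lt_ip|le_pi] := ltnP i (size p).
  rewrite (bigD1 (Ordinal lt_ip)) //= eqxx big1 ?addr0 // => k ne_ki.
  by rewrite eq_sym -(inj_eq val_inj) /= in ne_ki; rewrite (negbTE ne_ki) mulr0.
rewrite nth_default // mul0r big1 // => k _.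
by rewrite gtn_eqF ?mulr0 // (leq_trans (ltn_ord k)).
Qed.

Lemma twist_pvar2 a : twist a (pvar C o2) = pvar C o2.
Proof. exact: comp_polyC. Qed.

Lemma twist_pvar0 a : twist a (pvar C o0) = 'X * pvar C o2 ^+ a.
Proof. by rewrite /pvar /= comp_polyX rmorphXn. Qed.

Lemma twist_f1 a : twist a (f1 C a) = pvar C o2 ^+ a * ('X + 1).
Proof. by rewrite /f1 rmorphD rmorphXn twist_pvar0 twist_pvar2 mulrDr mulr1 mulrC. Qed.

Lemma map_polyCC_wide (S : {poly C}) n : (size S <= n)%N ->
  map_poly (polyC \o polyC) S = \sum_(k < n) pconst S`_k * 'X^k :> P3 C.
Proof.
move=> le_Sn; apply/polyP => i; rewrite coef_map coef_sum /=.
rewrite (eq_bigr (fun k : 'I_n => (S`_k)%:P%:P *+ (i == k))); last first.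
  by move=> k _; rewrite coefCM coefXn; case: eqP; rewrite ?mulr1 ?mulr0.
have [lt_in|le_ni] := ltnP i n.
  rewrite (bigD1 (Ordinal lt_in)) //= eqxx big1 ?addr0 // => k ne_ki.
  by rewrite eq_sym -(inj_eq val_inj) /= in ne_ki; rewrite (negbTE ne_ki).
rewrite nth_default ?(leq_trans le_Sn) // big1 // => k _.
by rewrite gtn_eqF // (leq_trans (ltn_ord k)).
Qed.

Lemma twist_homog_trunc (S : {poly C}) a b s : (s * a <= b)%N -> (size S <= s.+1)%N ->
  twist a (homog_trunc S a b s) = pvar C o2 ^+ b * map_poly (polyC \o polyC) S.
Proof.
move=> le_sab le_S; rewrite (map_polyCC_wide le_S) mulr_sumr rmorph_sum.
apply: eq_bigr => k _; rewrite !rmorphM !rmorphXn twist_pvar0 twist_pvar2 /= comp_polyC.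
have le_kab : (k * a <= b)%N by rewrite (leq_trans _ le_sab) // leq_mul2r -ltnS ltn_ord orbT.
by rewrite exprMn -exprM -!mulrA -exprD (mulnC a) subnKC // mulrA mulrC.
Qed.

End Twist.

Section Defect.
Variables (C : idomainType) (S : {poly C}) (a b s a' b' L : nat).
Hypotheses (le_sab : (s * a <= b)%N) (size_S : (size S <= s.+1)%N).
Hypotheses (aL : (a * b')%N = L) (bL : (b * a')%N = L).

Local Notation X3' := (('X : {poly C})%:P : {poly {poly C}}).
Local Notation defect := (homog_trunc S a b s ^+ a' - f1 C a ^+ b').
Local Notation root_defect := (S ^+ a' - ('X + 1) ^+ b').

Lemma twist_defect :
  twist C a defect = pvar C o2 ^+ L * map_poly (polyC \o polyC) root_defect.
Proof.
rewrite rmorphB !rmorphXn twist_homog_trunc // twist_f1 !exprMn -!exprM bL aL -mulrBr.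
by rewrite rmorphB !rmorphXn rmorphD /= map_polyX rmorph1.
Qed.

Lemma coef_defect i : defect`_i * X3' ^+ (a * i) = X3' ^+ L * (root_defect`_i)%:P%:P.
Proof.
rewrite -coef_twist twist_defect /pvar /= -rmorphXn coefCM coef_map /=.
by rewrite -rmorphXn.
Qed.

Hypothesis root_S : forall i, (i <= s)%N -> root_defect`_i = 0.

Lemma coef_defect_small i : (i <= s)%N -> defect`_i = 0.
Proof.
move=> le_is; have /eqP := coef_defect i; rewrite root_S // !rmorph0 mulr0.
by rewrite mulf_eq0 expf_eq0 polyC_eq0 polyX_eq0 andbF orbF => /eqP.
Qed.

Lemma tdeg_defect : (0 < a)%N -> (tdeg defect <= L - (a - 1) * s.+1)%N.
Proof.
move=> a_gt0; apply/tdeg_leP => i j k nz.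
have nz_i : defect`_i != 0 by apply: contraNneq nz => ->; rewrite !coef0.
have lt_si : (s < i)%N by rewrite ltnNge; apply: contra nz_i => /coef_defect_small/eqP.
have E := coef_defect i; rewrite -!rmorphXn -rmorphM in E.
have Ej := congr1 (fun q : {poly {poly C}} => q`_j) E.
rewrite /= coefMC coefC in Ej.
have j0 : j = 0%N.
  apply/eqP; apply: contraNT nz => nz_j; move: Ej; rewrite (negbTE nz_j) => /eqP.
  by rewrite mulf_eq0 expf_eq0 polyX_eq0 andbF orbF => /eqP->; rewrite coef0.
subst j; have := congr1 (fun q : {poly C} => q`_(k + a * i)) Ej.
rewrite /= coefMXn ltnNge leq_addl /= addnK coefMC coefXn.
have [<- _ | _] := eqVneq (k + a * i)%N L; last by rewrite mul0r => nz0; rewrite nz0 eqxx in nz.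
have : ((a - 1) * s.+1 <= (a - 1) * i)%N by rewrite leq_mul2l lt_si orbT.
have := leq_pmull i a_gt0; rewrite !mulnBl !mul1n; lia.
Qed.

End Defect.

Section LeadTermsOfComponents.
Variables (C : comNzRingType) (S : {poly C}) (a b s m : nat).
Hypotheses (a_ge2 : (2 <= a)%N) (le_sab : (s * a <= b)%N) (S0 : S`_0 = 1).

Lemma lead_term_f1 : lead_term (f1 C a) 1 0 0 a.
Proof.
exists (pvar C o0); first by rewrite pconst1_monomialX3 addrC.
by rewrite (leq_trans (tdeg_pvar _ _)) // -subn1 ltn_subRL.
Qed.

Lemma lead_term_homog_trunc : lead_term (homog_trunc S a b s) 1 0 0 b.
Proof.
rewrite /homog_trunc big_ord_recl; set q := \sum_(i < s) _.
rewrite S0 pconst1 mul0n subn0 expr0 !mul1r -pconst1_monomialX3.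
exists q => //.
apply: tdeg_sum_le => i; rewrite lift0.
have le_iab : (i.+1 * a <= b)%N by rewrite (leq_trans _ le_sab) // leq_mul2r ltn_ord orbT.
have le_i2a : (i.+1 * 2 <= i.+1 * a)%N by rewrite leq_mul2l a_ge2 orbT.
have le_x1 := tdegX_le i.+1 (tdeg_pvar C o0).
have le_x3 := tdegX_le (b - i.+1 * a) (tdeg_pvar C o2).
have := tdegM_le (tdegM_le (eq_leq (tdeg_pconst S`_i.+1)) le_x1) le_x3.
move/leq_trans; apply; move: le_iab le_i2a; set t := (i.+1 * a)%N; lia.
Qed.

Lemma tdeg_low_term : (tdeg (low_term C m) <= m)%N.
Proof.
rewrite /low_term; case: eqP => _; first by rewrite tdeg0.
by have := tdegX_le m (tdeg_pvar C o2); rewrite mul1n.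
Qed.

Hypotheses (m_gt0 : (0 < m)%N) (lt_mb : (m < b)%N).

Lemma lead_term_low_term :
  lead_term (pvar C o1 + low_term C m) 1 0 (m == 1%N) (m - (m == 1%N)).
Proof.
rewrite /low_term; have [->|ne_m1] := eqVneq m 1%N.
  by exists 0; rewrite ?tdeg0 // pconst1_monomialX2 !addr0.
exists (pvar C o1); first by rewrite subn0 pconst1_monomialX3 addrC.
by rewrite (leq_trans (tdeg_pvar _ _)) // add0n subn0 -subn1 ltn_subRL addn0 ltn_neqAle eq_sym ne_m1.
Qed.

Lemma lead_term_f2 : lead_term (f2 S a b s m) 1 0 0 b.
Proof.
rewrite /f2 addrC; apply: lead_term_addr; first exact: lead_term_homog_trunc.
apply: tdegD_le; last by apply: leq_trans tdeg_low_term _; lia.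
by rewrite (leq_trans (tdeg_pvar _ _)) //; lia.
Qed.

End LeadTermsOfComponents.

Section ThirdComponent.
Variables (C : numDomainType) (S : {poly C}) (a b s a' m k : nat).
Hypotheses (a_ge2 : (2 <= a)%N) (le_sab : (s * a <= b)%N) (S0 : S`_0 = 1).
Hypotheses (m_gt0 : (0 < m)%N) (lt_mb : (m < b)%N) (a'_gt0 : (0 < a')%N).

Local Notation T := (homog_trunc S a b s).
Local Notation f1 := (f1 C a).
Local Notation f2 := (f2 S a b s m).

Lemma lead_term_f2X_subX :
  lead_term ((f2 ^+ a' - T ^+ a') * f1 ^+ k) a'%:R
    0 (m == 1%N) (m - (m == 1%N) + a * k + b * a'.-1).
Proof.
have -> : (f2 ^+ a' - T ^+ a') * f1 ^+ k =
    \sum_(i < a') (pvar C o1 + low_term C m) * f1 ^+ k * f2 ^+ (a'.-1 - i) * T ^+ i.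
  rewrite subrXX /f2 addrK mulrAC mulr_sumr.
  by apply: eq_bigr => i _; rewrite !mulrA.
apply: lead_term_sum => i; have le_i : (i <= a'.-1)%N by rewrite -ltnS prednK.
have lt_d := lead_term_low_term C m_gt0.
have le_J0m : ((m == 1%N) <= m)%N by case: eqP => [->|].
move: lt_d le_J0m; set J0 := nat_of_bool _ => lt_d le_J0m.
have pos_d : (0 < 0 + J0 + (m - J0))%N by lia.
have pos_ext x : (0 < 0 + J0 + (m - J0 + x))%N by lia.
have pos_b : (0 < 0 + 0 + b)%N by lia.
have lt_1 := lead_termMX k lt_d (lead_term_f1 C a_ge2) pos_d (ltnW a_ge2).
rewrite !mul0n !addn0 in lt_1.
have := lead_termMX (a'.-1 - i) lt_1 (lead_term_f2 a_ge2 le_sab S0 m_gt0 lt_mb) (pos_ext _) pos_b.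
rewrite !mul0n !addn0 -addnA => lt_2.
have := lead_termMX i lt_2 (lead_term_homog_trunc a_ge2 le_sab S0) (pos_ext _) pos_b.
by rewrite !mul0n !addn0 !expr1n !mulr1 -!addnA -mulnDr subnK.
Qed.

Variables (b' L : nat).
Hypotheses (size_S : (size S <= s.+1)%N) (aL : (a * b')%N = L) (bL : (b * a')%N = L).
Hypothesis root_S : forall i, (i <= s)%N -> (S ^+ a' - ('X + 1) ^+ b')`_i = 0.
Hypothesis le_defect : (L - (a - 1) * s.+1 <= m + b * a'.-1)%N.

Lemma tdeg_f3 : tdeg (pvar C o2 + (f2 ^+ a' - f1 ^+ b') * f1 ^+ k) = (m + a * k + b * a'.-1)%N.
Proof.
have lt_A := lead_term_f2X_subX; set J0 := nat_of_bool _ in lt_A.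
set A := (f2 ^+ a' - T ^+ a') * f1 ^+ k in lt_A *; set B := (T ^+ a' - f1 ^+ b') * f1 ^+ k.
have -> : (f2 ^+ a' - f1 ^+ b') * f1 ^+ k = A + B by rewrite -mulrDl addrA subrK.
set K := (m - J0 + a * k + b * a'.-1)%N in lt_A.
have eJK : (J0 + K = m + a * k + b * a'.-1)%N by rewrite /K /J0; case: eqP => [->|]; lia.
have le_B : (tdeg B <= J0 + K)%N.
  have := tdegM_le (tdeg_defect le_sab size_S aL bL root_S (ltnW a_ge2))
    (tdegX_le k (lead_term_tdeg_le (lead_term_f1 C a_ge2))).
  by move/leq_trans; apply; rewrite eJK; lia.
have B0 : B`_0`_J0`_K = 0.
  by rewrite coef0M (coef_defect_small le_sab size_S aL bL root_S (leq0n s)) mul0r !coef0.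
clearbody A B; rewrite -eJK; apply: (@tdeg_eq_coef _ _ _ 0 J0 K) => //.
- apply: tdegD_le; last apply: tdegD_le => //; last exact: lead_term_tdeg_le lt_A.
  by rewrite (leq_trans (tdeg_pvar _ _)) // eJK -!addnA (leq_trans m_gt0) ?leq_addr.
rewrite !coefD B0 addr0 (lead_term_coef lt_A); last by rewrite add0n eJK -!addnA (leq_trans m_gt0) ?leq_addr.
rewrite -[pvar C o2]expr1 -pconst1_monomialX3 coef_pconst_monomial /=.
have -> : (J0 == 0%N) && (K == 1%N) = false.
  rewrite /K /J0; have [-> //|ne_m1] := eqVneq m 1%N.
  have : (1 < m)%N by rewrite ltn_neqAle eq_sym ne_m1.
  by move=> lt_1m; rewrite /= subn0 -!addnA gtn_eqF // ltn_addr.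
by rewrite add0r pnatr_eq0 -lt0n.
Qed.

End ThirdComponent.

Section Independence.
Variable C : comNzRingType.

Lemma indep_ofD j (p q : P3 C) : indep_of j p -> indep_of j q -> indep_of j (p + q).
Proof. by rewrite /indep_of pevalD => -> ->. Qed.

Lemma indep_of_low_term m : indep_of o1 (low_term C m).
Proof.
rewrite /indep_of /low_term; case: eqP => _; last by rewrite pevalX peval_pvar.
by rewrite pevalE rmorph0.
Qed.

Lemma indep_of_homog_trunc (S : {poly C}) a b s : indep_of o1 (homog_trunc S a b s).
Proof.
rewrite /indep_of peval_sum; apply: eq_bigr => i _.
by rewrite !pevalM !pevalX peval_pconst !peval_pvar.
Qed.

End Independence.

Lemma tdeg_f1 (C : comNzRingType) a : (2 <= a)%N -> tdeg (f1 C a) = a.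
Proof. by move=> a_ge2; rewrite (lead_term_tdeg (lead_term_f1 C a_ge2)) ?oner_neq0 //; lia. Qed.

Lemma tdeg_f2 (C : comNzRingType) (S : {poly C}) a b s m :
  (2 <= a)%N -> (s * a <= b)%N -> S`_0 = 1 -> (0 < m)%N -> (m < b)%N ->
  tdeg (f2 S a b s m) = b.
Proof.
move=> a_ge2 le_sab S0 m_gt0 lt_mb.
by rewrite (lead_term_tdeg (lead_term_f2 a_ge2 le_sab S0 m_gt0 lt_mb)) ?oner_neq0 //; lia.
Qed.

Lemma degree_decomposition (a b c : nat) : (2 < a)%N -> (a < b)%N ->
  (lcmn a b - minn (b - 1) ((a - 1) * (b %/ a + 1)) <= c)%N ->
  exists m k, [/\ (0 < m)%N, (m < b)%N, c = (m + a * k + (lcmn a b - b))%N &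
    (lcmn a b - (a - 1) * (b %/ a).+1 <= m + (lcmn a b - b))%N].
Proof.
move=> lt_2a lt_ab; rewrite addn1; set L := lcmn a b; set s := (b %/ a)%N.
set r := minn _ _ => le_c.
have a_gt0 : (0 < a)%N by apply: ltn_trans lt_2a.
have b_gt0 : (0 < b)%N by apply: ltn_trans lt_ab.
have s_gt0 : (0 < s)%N by rewrite divn_gt0 // ltnW.
have le_bL : (b <= L)%N by rewrite dvdn_leq ?lcmn_gt0 ?a_gt0 ?dvdn_lcmr.
have le_rb : (r <= b - 1)%N := geq_minl _ _.
have le_ra : (r <= (a - 1) * s.+1)%N := geq_minr _ _.
have le_ar : (a <= r)%N.
  have : ((a - 1) * 2 <= (a - 1) * s.+1)%N by rewrite leq_mul2l ltnS s_gt0 orbT.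
  rewrite leq_min; move: ((a - 1) * s.+1)%N => t; lia.
have := ltn_pmod (c - (L - r))%N a_gt0.
have := divn_eq (c - (L - r))%N a; rewrite (mulnC _ a).
move: ((c - (L - r)) %/ a)%N ((c - (L - r)) %% a)%N => q t e_c lt_ta.
exists (b - r + t)%N, q; move: (a * q)%N ((a - 1) * s.+1)%N e_c le_ra => aq u; split; lia.
Qed.

Lemma tame_of_mdeg (C : numFieldType) (a b m k : nat) :
  (2 <= a)%N -> (0 < m)%N -> (m < b)%N ->
  (lcmn a b - (a - 1) * (b %/ a).+1 <= m + (lcmn a b - b))%N ->
  exists F : polymap C, tame F /\ mdeg F = (a, b, m + a * k + (lcmn a b - b))%N.
Proof.
move=> a_ge2 m_gt0 lt_mb le_defect; have a_gt0 : (0 < a)%N by apply: ltnW.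
set g := gcdn a b; set L := lcmn a b; set s := (b %/ a)%N.
have g_gt0 : (0 < g)%N by rewrite gcdn_gt0 a_gt0.
have aL : (a * (b %/ g) = L)%N.
  by apply/eqP; rewrite -(eqn_pmul2r g_gt0) -mulnA divnK ?dvdn_gcdr // muln_lcm_gcd.
have bL : (b * (a %/ g) = L)%N.
  by apply/eqP; rewrite -(eqn_pmul2r g_gt0) -mulnA divnK ?dvdn_gcdl // muln_lcm_gcd mulnC.
have a'_gt0 : (0 < a %/ g)%N by rewrite divn_gt0 // dvdn_leq // dvdn_gcdl.
have LbE : (b * (a %/ g).-1 = L - b)%N by rewrite -subn1 mulnBr muln1 bL.
have le_sab : (s * a <= b)%N by apply: leq_divM.
have nz_a' : (a %/ g)%:R != 0 :> C by rewrite pnatr_eq0 -lt0n.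
have P0 : (('X + 1) ^+ (b %/ g))`_0 = 1 :> C by rewrite coef0X coefD coefX coef1 add0r expr1n.
have [S [size_S S0 approx_S]] := truncated_root s nz_a' P0.
have root_S i : (i <= s)%N -> (S ^+ (a %/ g) - ('X + 1) ^+ (b %/ g))`_i = 0.
  by move=> le_is; rewrite -opprB coefN approx_S ?oppr0.
have [F [tame_F F0 F1 F2]] := tame_triangular a (a %/ g) (b %/ g) k
  (indep_ofD (indep_of_low_term C m) (indep_of_homog_trunc S a b s)).
exists F; split => //; rewrite /mdeg F0 F1 F2 addrA tdeg_f1 // tdeg_f2 //.
rewrite -LbE in le_defect.
by rewrite (tdeg_f3 k a_ge2 le_sab S0 m_gt0 lt_mb a'_gt0 size_S aL bL root_S le_defect) LbE.
Qed.

Theorem theorem1 (C : numClosedFieldType) (a b c : nat) :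
  (2 < a)%N -> (a < b)%N ->
  (lcmn a b - minn (b - 1) ((a - 1) * (b %/ a + 1)) <= c)%N ->
  exists F : polymap C, tame F /\ mdeg F = (a, b, c).
Proof.
move=> lt_2a lt_ab le_c.
have [m [k [m_gt0 lt_mb -> le_defect]]] := degree_decomposition lt_2a lt_ab le_c.
exact: tame_of_mdeg (ltnW lt_2a) m_gt0 lt_mb le_defect.
Qed.
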